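(* Let $\mathbb{X}\subseteq\mathbb{P}^2$ be a $\Bbbk$-configuration of type $(d_1,\dots,d_s)$ defined by subsets $\mathbb{X}_1,\dots,\mathbb{X}_s$ and lines $\mathbb{L}_1,\dots,\mathbb{L}_s$, and let $\mathbb{L}$ be a line with $|\mathbb{L}\cap\mathbb{X}|=d_s$. (i) If $d_s>s$, then $\mathbb{L}\in\{\mathbb{L}_1,\dots,\mathbb{L}_s\}$. (ii) If $\mathbb{L}=\mathbb{L}_i$, then $d_j=d_s-s+j$ for all $j=i,\dots,s$.
   Context: $\Bbbk$ is an algebraically closed field. A $\Bbbk$-configuration of type $(d_1,\dots,d_s)$ is a finite set $\mathbb{X}\subseteq\mathbb{P}^2$ for which there exist integers $1\le d_1<\cdots<d_s$, subsets $\mathbb{X}_1,\dots,\mathbb{X}_s$ of $\mathbb{X}$ and distinct lines $\mathbb{L}_1,\dots,\mathbb{L}_s\subseteq\mathbb{P}^2$ such that (1) $\mathbb{X}=\bigcup_{i=1}^s\mathbb{X}_i$; (2) $|\mathbb{X}_i|=d_i$ and $\mathbb{X}_i\subseteq\mathbb{L}_i$ for each $i$; (3) for $1<i\le s$, $\mathbb{L}_i$ contains no point of $\mathbb{X}_j$ for any $j<i$. We say $\mathbb{X}$ is defined by these subsets and lines. *)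

From HB Require Import structures.
From mathcomp Require Import all_boot all_order all_algebra.
Set Implicit Arguments. Unset Strict Implicit. Unset Printing Implicit Defensive.
Import GRing.Theory.
Local Open Scope ring_scope.

(* Homogeneous coordinates: a point of P^2 (resp. a line of P^2) is represented
   by a nonzero row vector in K^3 (resp. nonzero linear form, i.e. its
   coefficient row vector); two representatives give the same projective
   object iff they are proportional. *)
Definition proj_same (K : fieldType) (u v : 'rV[K]_3) : Prop :=
  exists2 c : K, c != 0 & v = c *: u.

Definition on_line (K : fieldType) (l p : 'rV[K]_3) : bool :=
  (p *m l^T) 0 0 == 0.

Definition point_set (K : fieldType) (X : seq 'rV[K]_3) : Prop :=
  [/\ uniq X, forall x, x \in X -> x != 0
    & forall x y, x \in X -> y \in X -> proj_same x y -> x = y].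

(* X is a k-configuration of type (d 0, ..., d (s-1)) defined by subsets
   Xs 0, ..., Xs (s-1) and lines Ls 0, ..., Ls (s-1)  (0-based indices;
   paper's index i corresponds to i-1 here). *)
Definition kconfig (K : fieldType) (s : nat) (d : nat -> nat)
    (X : seq 'rV[K]_3) (Xs : nat -> seq 'rV[K]_3) (Ls : nat -> 'rV[K]_3) : Prop :=
  [/\ point_set X /\ (0 < s)%N /\ (1 <= d 0)%N /\
        (forall i, (i.+1 < s)%N -> (d i < d i.+1)%N),
      (forall i, (i < s)%N -> Ls i != 0) /\
      (forall i j, (i < s)%N -> (j < s)%N -> proj_same (Ls i) (Ls j) -> i = j),
      (forall i, (i < s)%N -> {subset Xs i <= X}) /\
      (forall x, x \in X -> exists2 i, (i < s)%N & x \in Xs i),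
      (forall i, (i < s)%N ->
         [/\ uniq (Xs i), size (Xs i) = d i & all (on_line (Ls i)) (Xs i)])
    &
      (forall i j, (j < i)%N -> (i < s)%N ->
         forall x, x \in Xs j -> ~~ on_line (Ls i) x)].

(* Two distinct points lie on exactly one line, so a line L other than L_j meets
   X_j in at most one point, while L meets X in at most the sum of these counts.
   (i) If L is none of the L_j, it therefore contains at most s < d_s points of X.
   (ii) If L = L_i, then X_j (j < i) avoids L, X_i contributes at most d_i points
   and every later X_j at most one, so d_s <= d_i + (s - i); since the d_j increase
   strictly, d_s >= d_j + (s - j) >= d_i + (s - i), forcing equality throughout. *)

From HB Require Import structures.
From mathcomp Require Import all_boot all_order all_algebra zify.
Set Implicit Arguments. Unset Strict Implicit. Unset Printing Implicit Defensive.
Import GRing.Theory.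

Lemma count_le_sum_cover (T : eqType) (P : pred T) (X : seq T) (Xs : nat -> seq T) n :
  uniq X -> (forall x, x \in X -> exists2 i, i < n & x \in Xs i) ->
  count P X <= \sum_(0 <= i < n) count P (Xs i).
Proof.
move=> uX X_cover.
have -> : \sum_(0 <= i < n) count P (Xs i) = count P (flatten (map Xs (index_iota 0 n))).
  by rewrite count_flatten sumnE !big_map.
rewrite -!size_filter; apply: uniq_leq_size; first exact: filter_uniq.
move=> x; rewrite !mem_filter => /andP[Px xX]; rewrite Px /=.
have [i lt_in x_i] := X_cover x xX.
by apply/flattenP; exists (Xs i) => //; apply: map_f; rewrite mem_index_iota.
Qed.

Lemma leq_sum_nat m n (F G : nat -> nat) :
  (forall i, m <= i < n -> F i <= G i) ->
  \sum_(m <= i < n) F i <= \sum_(m <= i < n) G i.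
Proof.
move=> le_FG; rewrite big_nat_cond [X in _ <= X]big_nat_cond.
by apply: leq_sum => i /andP[/le_FG].
Qed.

Lemma sum_nat_le1 m n (F : nat -> nat) :
  (forall i, m <= i < n -> F i <= 1) -> \sum_(m <= i < n) F i <= n - m.
Proof. by move=> F_le1; rewrite -[n - m]muln1 -sum_nat_const_nat; exact: leq_sum_nat. Qed.

Lemma exists_gt1_of_sum_gt n (F : nat -> nat) :
  n < \sum_(0 <= i < n) F i -> exists2 i, i < n & 1 < F i.
Proof.
move=> lt_n_sum.
have [i F_gt1 | F_le1] := pickP (fun i : 'I_n => 1 < F i); first by exists i.
have: \sum_(0 <= i < n) F i <= n - 0.
  by apply: sum_nat_le1 => i /andP[_ lt_in]; rewrite leqNgt (F_le1 (Ordinal lt_in)).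
by rewrite subn0 leqNgt lt_n_sum.
Qed.

Lemma sum_nat_le1_after i n (F : nat -> nat) :
  i < n -> (forall k, k < i -> F k = 0) -> (forall k, i < k < n -> F k <= 1) ->
  \sum_(0 <= k < n) F k <= F i + (n - i.+1).
Proof.
move=> lt_in F_before F_after.
rewrite (@big_cat_nat _ _ _ i) ?(ltnW lt_in) //= [X in _ + X <= _]big_ltn //.
rewrite big_nat_cond big1 => [|k /andP[/andP[_ /F_before]] //].
by rewrite add0n leq_add2l sum_nat_le1.
Qed.

Lemma ltn_incr_gap n (d : nat -> nat) a b :
  (forall i, i.+1 < n -> d i < d i.+1) -> a <= b -> b < n -> d a + (b - a) <= d b.
Proof.
move=> d_incr; elim: b => [|b IHb]; first by rewrite leqn0 => /eqP ->; rewrite addn0.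
rewrite leq_eqVlt => /predU1P[-> | lt_ab] lt_bn; first by rewrite subnn addn0.
by have := IHb lt_ab (ltnW lt_bn); have := d_incr b lt_bn; lia.
Qed.

Local Open Scope ring_scope.

Section Incidence.
Variable K : fieldType.
Implicit Types (u v l p q : 'rV[K]_3).

Lemma on_lineE l p : on_line l p = (l *m p^T == 0).
Proof.
rewrite /on_line -{1}(trmxK p) -trmx_mul mxE.
apply/eqP/eqP => [lp0 | ->]; last by rewrite mxE.
by apply/matrixP => i j; rewrite !ord1 lp0 mxE.
Qed.

Lemma on_line_proj_same l1 l2 p : proj_same l1 l2 -> on_line l2 p = on_line l1 p.
Proof.
by case=> c c_neq0 ->; rewrite !on_lineE -scalemxAl scaler_eq0 (negbTE c_neq0).
Qed.

Lemma proj_same_sym u v : proj_same u v -> proj_same v u.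
Proof.
case=> c c_neq0 ->; exists c^-1; first by rewrite invr_eq0.
by rewrite scalerA mulVf // scale1r.
Qed.

Lemma proj_same_trans u v w : proj_same u v -> proj_same v w -> proj_same u w.
Proof.
case=> c c_neq0 ->; case=> e e_neq0 ->; exists (e * c); first by rewrite mulf_neq0.
by rewrite scalerA.
Qed.

Lemma proj_same_submx u v : v != 0 -> (v <= u)%MS -> proj_same u v.
Proof.
move=> v_neq0 /submxP[D def_v]; rewrite def_v [D]mx11_scalar mul_scalar_mx in v_neq0 *.
by exists (D 0 0) => //; apply: contraNneq v_neq0 => ->; rewrite scale0r.
Qed.

Lemma rank_two_points p q :
  p != 0 -> q != 0 -> ~ proj_same p q -> \rank (col_mx p q) = 2%N.
Proof.
move=> p_neq0 q_neq0 not_pq; apply/eqP; rewrite eqn_leq rank_leq_row ltnNge /=.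
apply/negP => rank_le1; apply: not_pq; apply: proj_same_submx => //.
have p_sub : (p <= col_mx p q)%MS by rewrite -addsmxE addsmxSl.
have q_sub : (q <= col_mx p q)%MS by rewrite -addsmxE addsmxSr.
apply: submx_trans q_sub _.
by rewrite -(mxrank_leqif_sup p_sub).2 eqn_leq mxrankS //= rank_rV p_neq0.
Qed.

Lemma line_through_two_points l1 l2 p q :
  l1 != 0 -> l2 != 0 -> p != 0 -> q != 0 -> ~ proj_same p q ->
  on_line l1 p -> on_line l1 q -> on_line l2 p -> on_line l2 q -> proj_same l1 l2.
Proof.
move=> l1_neq0 l2_neq0 p_neq0 q_neq0 not_pq; rewrite !on_lineE.
pose A := row_mx p^T q^T.
have on_both l : l *m p^T == 0 -> l *m q^T == 0 -> (l <= kermx A)%MS.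
  by move=> /eqP lp /eqP lq; apply/sub_kermxP; rewrite mul_mx_row lp lq row_mx0.
move=> /on_both l1A /l1A{}l1A /on_both l2A /l2A{}l2A.
have rank_ker : \rank (kermx A) = 1%N.
  by rewrite mxrank_ker -mxrank_tr tr_row_mx !trmxK rank_two_points.
apply: proj_same_submx l2_neq0 (submx_trans l2A _).
by rewrite -(mxrank_leqif_sup l1A).2 rank_ker rank_rV l1_neq0.
Qed.

Lemma proj_same_of_count_on_line_gt1 L l (X S : seq 'rV[K]_3) :
  point_set X -> {subset S <= X} -> uniq S -> all (on_line l) S ->
  L != 0 -> l != 0 -> (1 < count (on_line L) S)%N -> proj_same L l.
Proof.
case=> _ X_neq0 X_inj S_X uS /allP S_l L_neq0 l_neq0; rewrite -size_filter.
move: (filter_uniq (on_line L) uS) (mem_filter (on_line L) ^~ S).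
case: (filter _ S) => [|x [|y t]] //= /andP[xNyt _] memLS _.
have /andP[xL xS] : on_line L x && (x \in S) by rewrite -memLS mem_head.
have /andP[yL yS] : on_line L y && (y \in S) by rewrite -memLS !inE eqxx orbT.
have [xX yX] := (S_X x xS, S_X y yS).
apply: (line_through_two_points L_neq0 l_neq0 (X_neq0 x xX) (X_neq0 y yX)); rewrite ?S_l //.
by move/(X_inj x y xX yX) => x_eq_y; rewrite x_eq_y mem_head in xNyt.
Qed.

End Incidence.

Theorem lemma2p5 (K : closedFieldType) (s : nat) (d : nat -> nat)
    (X : seq 'rV[K]_3) (Xs : nat -> seq 'rV[K]_3) (Ls : nat -> 'rV[K]_3)
    (L : 'rV[K]_3) :
  kconfig s d X Xs Ls ->
  L != 0 ->
  count (on_line L) X = d s.-1 ->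
  ((s < d s.-1)%N -> exists2 i, (i < s)%N & proj_same L (Ls i)) /\
  (forall i, (i < s)%N -> proj_same L (Ls i) ->
     forall j, (i <= j < s)%N -> d j = (d s.-1 - s + j.+1)%N).
Proof.
case=> [[ptX [_ [d0_gt0 d_incr]]] [Ls_neq0 Ls_inj] [Xs_sub X_cover] Xs_line Xs_avoid].
move=> L_neq0 cntL; pose f j := count (on_line L) (Xs j).
have sum_ge : (d s.-1 <= \sum_(0 <= j < s) f j)%N.
  by rewrite -cntL; apply: count_le_sum_cover X_cover; case: ptX.
have line_of_f j : (j < s)%N -> (1 < f j)%N -> proj_same L (Ls j).
  move=> lt_js; have [uXj _ onLj] := Xs_line j lt_js.
  exact: proj_same_of_count_on_line_gt1 ptX (Xs_sub j lt_js) uXj onLj L_neq0 (Ls_neq0 j lt_js).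
split=> [lt_s_d | i lt_is L_Li j /andP[le_ij lt_js]].
  have [j lt_js f_gt1] := exists_gt1_of_sum_gt (leq_trans lt_s_d sum_ge).
  by exists j; last exact: line_of_f.
have f_before k : (k < i)%N -> f k = 0%N.
  move=> lt_ki; apply/eqP; rewrite eqn0Ngt -has_count; apply/hasPn => x xk.
  by rewrite -(on_line_proj_same x L_Li) (Xs_avoid i k).
have f_at : (f i <= d i)%N by have [_ <- _] := Xs_line i lt_is; exact: count_size.
have f_after k : (i < k < s)%N -> (f k <= 1)%N.
  case/andP=> lt_ik lt_ks; rewrite leqNgt; apply/negP => /(line_of_f k lt_ks) L_Lk.
  have := Ls_inj i k lt_is lt_ks (proj_same_trans (proj_same_sym L_Li) L_Lk).
  by move/eqP; rewrite ltn_eqF.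
have /andP[le_js1 lt_s1s] : (j <= s.-1 < s)%N by lia.
have := ltn_incr_gap d_incr (leq0n s.-1) lt_s1s.
have := ltn_incr_gap d_incr le_ij lt_js.
have := ltn_incr_gap d_incr le_js1 lt_s1s.
have := sum_nat_le1_after lt_is f_before f_after.
lia.
Qed.
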